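(* Let $[a(n)]\in\mathbb{L}$. Then: (1) $[a(n)]\in\mathbb{B}$; (2) for every integer $m\ge2$, $[a(mn)]=[a(n)]$; (3) $\pi_{\mathbb{E}}([a(n)])=0$, i.e. $\limsup_{n\to\infty}\frac{\log a(n)}{n}=0$.
   Context: Let $\mathcal{O}$ be the set of non-decreasing sequences $a:\mathbb{N}\to[0,\infty)$, $a\approx b$ iff $c_1a(n)\le b(n)\le c_2a(n)$ for all $n$ for some constants $0<c_1\le c_2$, $\mathbb{O}=\mathcal{O}/\!\approx$ with classes $[a(n)]$. A class $[a(n)]$ has the linearly invariant property (LIP) if $[a(mn)]=[a(n)]$ for some integer $m\ge2$; $\mathbb{L}$ is the set of such classes. It has the bounded jump property if there is $C>0$ with $a(n+1)\le Ca(n)$ for all $n$; $\mathbb{B}$ is the set of such classes. For $[a(n)]\in\mathbb{O}$, $\pi_{\mathbb{E}}([a(n)])=\inf\{t>0:[a(n)]\le[e^{tn}]\}$ (with value $\infty$ if the set is empty), which equals $\limsup_{n\to\infty}\frac{\log a(n)}{n}$. *)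

From HB Require Import structures.
From mathcomp Require Import all_boot all_order all_algebra.
From mathcomp Require Import all_classical all_reals all_analysis.
Set Implicit Arguments. Unset Strict Implicit. Unset Printing Implicit Defensive.
Import Order.TTheory GRing.Theory Num.Theory.
Local Open Scope ring_scope.
Local Open Scope classical_set_scope.

(* Sequences are indexed by the positive integers N = {1,2,...}; values at
   index 0 are ignored everywhere. *)

Definition in_O (R : realType) (a : nat -> R) : Prop :=
  (forall n, (0 < n)%N -> 0 <= a n) /\
  (forall n k, (0 < n)%N -> (n <= k)%N -> a n <= a k).

Definition seq_equiv (R : realType) (a b : nat -> R) : Prop :=
  exists c1 c2 : R, 0 < c1 /\ c1 <= c2 /\
    forall n, (0 < n)%N -> c1 * a n <= b n /\ b n <= c2 * a n.

Definition seq_le (R : realType) (a b : nat -> R) : Prop :=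
  exists C : R, 0 < C /\ forall n, (0 < n)%N -> a n <= C * b n.

Definition LIP (R : realType) (a : nat -> R) : Prop :=
  exists m : nat, (2 <= m)%N /\ seq_equiv (fun n => a (m * n)%N) a.

Definition bounded_jump (R : realType) (a : nat -> R) : Prop :=
  exists C : R, 0 < C /\ forall n, (0 < n)%N -> a n.+1 <= C * a n.

(* pi_E([a]) = inf {t > 0 : [a] <= [e^{tn}]}, +oo if the set is empty *)
Definition pi_E (R : realType) (a : nat -> R) : \bar R :=
  ereal_inf [set (t%:E)%E | t in [set t : R | 0 < t /\
                          seq_le a (fun n => expR (t * n%:R))]].

From mathcomp Require Import all_boot all_order all_algebra.
From mathcomp Require Import all_classical all_reals all_analysis.
From mathcomp Require Import zify lra.
Import Order.TTheory GRing.Theory Num.Theory.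
Local Open Scope ring_scope.

(* The LIP gives an integer m >= 2 and a constant D >= 1
   with a(mn) <= D a(n) for all n >= 1 (only the lower equivalence constant
   is needed).  Everything follows from this single dilation bound and the
   monotonicity of a:
   - bounded jump: a(n+1) <= a(mn) <= D a(n), since n+1 <= 2n <= mn;
   - iterating, a(m^k n) <= D^k a(n); as m' < m^m' for every m' >= 1,
     a(m'n) <= D^m' a(n), while a(n) <= a(m'n) by monotonicity, so
     [a(m'n)] = [a(n)];
   - for n >= m, with q = n / m we have n <= m(q+1), hence
     a(n) <= D a(q+1) <= D^2 a(q); an induction on n then shows
     a(n) <= C e^{tn} for every t > 0 (the factor D^2 is absorbed by
     e^{tq} once q is large, and 2q <= n), so [a] <= [e^{tn}];
   - finally pi_E is the infimum of a set of positive reals containing every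
     t > 0, hence equals 0. *)

Section DilationBound.
Context {R : realType} {a : nat -> R} {m : nat} {D : R}.
Hypothesis a_ge0 : forall n, (0 < n)%N -> 0 <= a n.
Hypothesis a_mono : forall n k, (0 < n)%N -> (n <= k)%N -> a n <= a k.
Hypothesis m_ge2 : (2 <= m)%N.
Hypothesis D_ge1 : 1 <= D.
Hypothesis dilation : forall n, (0 < n)%N -> a (m * n)%N <= D * a n.

Let m_gt0 : (0 < m)%N. Proof. exact: leq_trans m_ge2. Qed.
Let D_ge0 : 0 <= D. Proof. exact: le_trans ler01 D_ge1. Qed.

(* One step to the right costs at most the factor D: a(n+1) <= a(mn). *)
Lemma dilation_jump n : (0 < n)%N -> a n.+1 <= D * a n.
Proof.
move=> n_gt0; apply: le_trans _ (dilation _ n_gt0); apply: a_mono => //.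
have : (2 * n <= m * n)%N by rewrite leq_mul2r m_ge2 orbT.
lia.
Qed.

Lemma dilation_iter k n : (0 < n)%N -> a (m ^ k * n)%N <= D ^+ k * a n.
Proof.
move=> n_gt0; elim: k => [|k IH]; first by rewrite expn0 mul1n expr0 mul1r.
rewrite expnS -mulnA exprS -mulrA.
have mkn_gt0 : (0 < m ^ k * n)%N by rewrite muln_gt0 expn_gt0 m_gt0 n_gt0.
by apply: le_trans (dilation _ mkn_gt0) _; apply: ler_wpM2l.
Qed.

(* Every dilation by m' >= 1 is bounded by D^m', because m' < m^m'. *)
Lemma dilation_any m' n : (0 < m')%N -> (0 < n)%N ->
  a (m' * n)%N <= D ^+ m' * a n.
Proof.
move=> m'_gt0 n_gt0; apply: le_trans _ (dilation_iter m' _ n_gt0).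
apply: a_mono; first by rewrite muln_gt0 m'_gt0 n_gt0.
by rewrite leq_mul2r ltnW ?orbT // ltn_expl.
Qed.

Lemma dilation_equiv m' : (0 < m')%N -> seq_equiv (fun n => a (m' * n)%N) a.
Proof.
move=> m'_gt0; have Dm'_ge1 : 1 <= D ^+ m' by exact: exprn_ege1.
have Dm'_gt0 : 0 < D ^+ m' by exact: lt_le_trans ltr01 Dm'_ge1.
exists (D ^+ m')^-1, 1; split; first by rewrite invr_gt0.
split; first by rewrite invf_le1.
move=> n n_gt0 /=; rewrite mul1r ler_pdivrMl //; split.
  exact: dilation_any.
by apply: a_mono => //; rewrite leq_pmull.
Qed.

Lemma dilation_quotient n : (0 < n %/ m)%N -> a n <= D ^+ 2 * a (n %/ m).
Proof.
move=> q_gt0; have n_gt0 : (0 < n)%N by apply: leq_trans (leq_div n m).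
have n_le : (n <= m * (n %/ m).+1)%N by rewrite mulnC ltnW // ltn_ceil.
apply: le_trans (a_mono _ _ n_gt0 n_le) _.
apply: le_trans (dilation _ (ltn0Sn _)) _.
by rewrite expr2 -mulrA; apply: ler_wpM2l => //; apply: dilation_jump.
Qed.

Lemma dilation_subexponential t : 0 < t ->
  exists C, 0 < C /\ forall n, (0 < n)%N -> a n <= C * expR (t * n%:R).
Proof.
move=> t_gt0.
pose N0 := (Num.truncn (D ^+ 2 / t)).+1.
pose K := (m * N0)%N.
pose B := \sum_(i < K) `|a i|.
have B_ge0 : 0 <= B by apply: sumr_ge0.
have a_le_B i : (i < K)%N -> a i <= B.
  move=> iK; rewrite /B (bigD1 (Ordinal iK)) //=.
  by apply: le_trans (ler_norm _) _; rewrite lerDl sumr_ge0.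
have D2_lt : D ^+ 2 < t * N0%:R.
  by rewrite -ltr_pdivrMl // mulrC truncnS_gt.
exists (B + 1); split; first lra.
elim/ltn_ind => n IH n_gt0.
have [nK|Kn] := ltnP n K.
  have e_ge1 : 1 <= expR (t * n%:R).
    by apply: le_trans _ (expR_ge1Dx _); rewrite lerDl mulr_ge0 ?ler0n // ltW.
  have an_le : a n <= B + 1 by have := a_le_B n nK; lra.
  by rewrite -[a n]mulr1; apply: ler_pM => //; exact: a_ge0.
pose q := (n %/ m)%N.
have N0_le_q : (N0 <= q)%N by rewrite -(mulKn N0 m_gt0) leq_div2r.
have q_gt0 : (0 < q)%N by apply: leq_trans N0_le_q.
have q2_le_n : (2 * q <= n)%N.
  by apply: leq_trans (leq_divM n m); rewrite mulnC leq_mul2l m_ge2 orbT.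
have D2_le_e : D ^+ 2 <= expR (t * q%:R).
  apply: le_trans (ltW D2_lt) _; apply: le_trans _ (expR_ge1Dx _).
  by rewrite ler_wpDl // ler_pM2l // ler_nat.
have e2_le : expR (t * q%:R) * expR (t * q%:R) <= expR (t * n%:R).
  by rewrite -expRD ler_expR -mulrDr ler_pM2l // -natrD ler_nat addnn -mul2n.
apply: le_trans (dilation_quotient n q_gt0) _.
apply: le_trans (_ : _ <= expR (t * q%:R) * ((B + 1) * expR (t * q%:R))) _.
  apply: ler_pM; [exact: exprn_ge0|exact: a_ge0|exact: D2_le_e|].
  by apply: IH => //; apply: ltn_Pdiv.
by rewrite mulrCA ler_wpM2l //; lra.
Qed.

End DilationBound.

Lemma dilation_bound_of_equiv {R : realType} {a : nat -> R} {m : nat} :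
  (forall n, (0 < n)%N -> 0 <= a n) ->
  seq_equiv (fun n => a (m * n)%N) a ->
  exists2 D : R, 1 <= D & forall n, (0 < n)%N -> a (m * n)%N <= D * a n.
Proof.
move=> a_ge0 [c1 [c2 [c1_gt0 [_ equiv]]]].
exists (Num.max 1 c1^-1); first by rewrite le_max lexx.
move=> n n_gt0; have [lower _] := equiv n n_gt0.
rewrite -[a (m * n)%N](mulKf (lt0r_neq0 c1_gt0)).
apply: le_trans (_ : _ <= c1^-1 * a n) _.
  by apply: ler_wpM2l => //; rewrite invr_ge0 ltW.
by apply: ler_wpM2r; [exact: a_ge0|rewrite le_max lexx orbT].
Qed.

Lemma ereal_inf_all_pos {R : realType} (P : R -> Prop) :
  (forall t, 0 < t -> P t) ->
  ereal_inf [set (t%:E)%E | t in [set t : R | 0 < t /\ P t]] = 0%E.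
Proof.
move=> allP; set S := (X in ereal_inf X).
have inf_le e : 0 < e -> (ereal_inf S <= e%:E)%E.
  by move=> e_gt0; apply: ereal_inf_lbound; exists e => //; split => //; exact: allP.
apply/eqP; rewrite eq_le; apply/andP; split.
  move: inf_le; case: (ereal_inf S) => [r| |] inf_le //.
    by rewrite lee_fin; apply/unstable.ler_gtP => e e_gt0; rewrite -lee_fin inf_le.
  by have := inf_le 1 ltr01.
by apply: le_ereal_inf_tmp => _ [t [t_gt0 _] <-]; rewrite lee_fin ltW.
Qed.

Theorem proposition2p7 (R : realType) (a : nat -> R) :
  in_O a -> LIP a ->
  bounded_jump a /\
  (forall m : nat, (2 <= m)%N -> seq_equiv (fun n => a (m * n)%N) a) /\
  pi_E a = 0%E.
Proof.
move=> [a_ge0 a_mono] [m [m_ge2 equiv_m]].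
have [D D_ge1 dil] := dilation_bound_of_equiv a_ge0 equiv_m.
split; [|split].
- exists D; split; first exact: lt_le_trans ltr01 D_ge1.
  exact: dilation_jump a_mono m_ge2 D_ge1 dil.
- move=> m' m'_ge2; apply: (dilation_equiv a_mono m_ge2 D_ge1 dil).
  exact: leq_trans m'_ge2.
- apply: ereal_inf_all_pos => t t_gt0.
  have [C [C_gt0 bound]] := dilation_subexponential a_ge0 a_mono m_ge2 D_ge1 dil t t_gt0.
  by exists C.
Qed.
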